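(* Let $\mathcal{D}$ be an abstract system of proof notations and $d\in\mathcal{D}$ with $o(d)\ge2$. Then for all $n\ge1$ and all $s\ge2$, $\vartheta_{\mathsf E^nd}(s)\le 2_{n-1}(2\cdot o(d))\cdot s$, where $\mathsf E^nd$ denotes $\mathsf E\cdots\mathsf Ed$ with $n$ occurrences of $\mathsf E$.
   Context: An abstract system of proof notations is a set $\mathcal{D}$ with functions $|\cdot|,o(\cdot)\colon\mathcal{D}\to\mathbb{N}\setminus\{0\}$ (size and height) and a relation $\to\subseteq\mathcal{D}\times\mathcal{D}$ such that $d\to d'$ implies $o(d')<o(d)$. The cut-elimination closure $\mathbb{E}(\mathcal{D})$ consists of formal terms inductively generated by: every $d\in\mathcal{D}$ (with size and height inherited); if $d,e\in\mathbb{E}(\mathcal{D})$ then $\mathsf{I}d,\ \mathsf{R}de,\ \mathsf{E}d\in\mathbb{E}(\mathcal{D})$ ($\mathsf I,\mathsf R,\mathsf E$ new symbols), with $|\mathsf Id|=|d|+1$, $|\mathsf Rde|=|d|+|e|+1$, $|\mathsf Ed|=|d|+1$, $o(\mathsf Id)=o(d)$, $o(\mathsf Rde)=o(d)+o(e)$, $o(\mathsf Ed)=2^{o(d)}-1$. The size function $\vartheta_d\colon\mathbb{N}\to\mathbb{N}$ for $d\in\mathbb{E}(\mathcal{D})$ is defined by recursion: $\vartheta_d(s)=s$ for $d\in\mathcal{D}$; $\vartheta_{\mathsf Id}(s)=\vartheta_d(s)+1$; $\vartheta_{\mathsf Rde}(s)=\max\{|d|+1+\vartheta_e(s),\ \vartheta_d(s)+1\}$;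 $\vartheta_{\mathsf Ed}(s)=o(d)\cdot(\vartheta_d(s)+2)$. Iterated exponentiation: $2_0(x)=x$, $2_{n+1}(x)=2^{2_n(x)}$. *)

From Stdlib Require Import Arith Lia.

Record ProofSystem := {
  pn_carrier :> Type;
  pn_size : pn_carrier -> nat;
  pn_height : pn_carrier -> nat;
  pn_step : pn_carrier -> pn_carrier -> Prop;
  pn_size_pos : forall d, 0 < pn_size d;
  pn_height_pos : forall d, 0 < pn_height d;
  pn_step_height : forall d d', pn_step d d' -> pn_height d' < pn_height d
}.

Inductive ECl (D : ProofSystem) : Type :=
| EBase : D -> ECl D
| EI : ECl D -> ECl D
| ER : ECl D -> ECl D -> ECl D
| EE : ECl D -> ECl D.

Arguments EBase {D} _.
Arguments EI {D} _.
Arguments ER {D} _ _.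
Arguments EE {D} _.

Fixpoint esize {D : ProofSystem} (d : ECl D) : nat :=
  match d with
  | EBase x => pn_size D x
  | EI d => esize d + 1
  | ER d e => esize d + esize e + 1
  | EE d => esize d + 1
  end.

Fixpoint eheight {D : ProofSystem} (d : ECl D) : nat :=
  match d with
  | EBase x => pn_height D x
  | EI d => eheight d
  | ER d e => eheight d + eheight e
  | EE d => 2 ^ eheight d - 1
  end.

Fixpoint theta {D : ProofSystem} (d : ECl D) (s : nat) : nat :=
  match d with
  | EBase _ => s
  | EI d => theta d s + 1
  | ER d e => Nat.max (esize d + 1 + theta e s) (theta d s + 1)
  | EE d => eheight d * (theta d s + 2)
  end.

Fixpoint Eiter {D : ProofSystem} (n : nat) (d : ECl D) : ECl D :=
  match n with
  | 0 => d
  | S n => EE (Eiter n d)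
  end.

Fixpoint tower (n x : nat) : nat :=
  match n with
  | 0 => x
  | S n => 2 ^ tower n x
  end.

(* Along the iteration e, E e, E (E e), ... we keep, for the current term e
   and a bound t, the two estimates theta_e(s) <= t s and o(e) (t + 1) <= 2^t.
   Passing to E e multiplies theta by o(e) and adds 2 o(e) <= o(e) s, so the
   first estimate propagates with the new bound 2^t; the second propagates
   because o(E e) = 2^o(e) - 1 and o(e) + t + 1 <= o(e) (t + 1) <= 2^t.
   Both hold for E d with t = 2 o(d), which starts the tower. *)

From Stdlib Require Import Arith Lia.

Lemma pow2_ge1 (n : nat) : 1 <= 2 ^ n.
Proof. apply Nat.pow_le_mono_r with (a := 2) (b := 0); lia. Qed.

Lemma pow2_linear_le (n : nat) : 3 <= n -> 2 * n + 2 <= 2 ^ n.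
Proof.
  intros Hn; induction Hn as [|n Hn IH]; [simpl; lia|].
  rewrite Nat.pow_succ_r'; lia.
Qed.

Lemma pred_pow2_mul_double_succ_le (h : nat) :
  2 <= h -> (2 ^ h - 1) * (2 * h + 1) <= 2 ^ (2 * h).
Proof.
  intros Hh.
  destruct (Nat.eq_dec h 2) as [->|Hne]; [simpl; lia|].
  assert (Hlin := pow2_linear_le h ltac:(lia)).
  assert (H1 := pow2_ge1 h).
  replace (2 * h) with (h + h) at 2 by lia; rewrite Nat.pow_add_r; nia.
Qed.

Lemma pred_pow2_mul_pow2_succ_le (a t : nat) :
  2 <= a -> 1 <= t -> a * (t + 1) <= 2 ^ t ->
  (2 ^ a - 1) * (2 ^ t + 1) <= 2 ^ (2 ^ t).
Proof.
  intros Ha Ht Hat.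
  assert (Hexp : 2 ^ (a + t + 1) <= 2 ^ (2 ^ t))
    by (apply Nat.pow_le_mono_r; nia).
  rewrite !Nat.pow_add_r in Hexp; simpl in Hexp.
  assert (H1 := pow2_ge1 a); assert (H2 := pow2_ge1 t).
  nia.
Qed.

Lemma Eiter_succ_r {D : ProofSystem} (n : nat) (e : ECl D) :
  Eiter (S n) e = Eiter n (EE e).
Proof. induction n as [|n IH]; simpl in *; congruence. Qed.

Lemma eheight_Eiter_ge2 {D : ProofSystem} (n : nat) (e : ECl D) :
  2 <= eheight e -> 2 <= eheight (Eiter n e).
Proof.
  intros He; induction n as [|n IH]; simpl; [exact He|].
  assert (4 <= 2 ^ eheight (Eiter n e))
    by (change 4 with (2 ^ 2); apply Nat.pow_le_mono_r; lia).
  lia.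
Qed.

Lemma tower_ge1 (n t : nat) : 1 <= t -> 1 <= tower n t.
Proof. intros Ht; destruct n; simpl; [exact Ht | apply pow2_ge1]. Qed.

Section TowerBound.

Variables (D : ProofSystem) (s : nat).
Hypothesis Hs : 2 <= s.

Definition tower_bounded (e : ECl D) (t : nat) : Prop :=
  theta e s <= t * s /\ eheight e * (t + 1) <= 2 ^ t.

Lemma tower_bounded_EE (e : ECl D) (t : nat) :
  2 <= eheight e -> 1 <= t -> tower_bounded e t -> tower_bounded (EE e) (2 ^ t).
Proof.
  intros He Ht [Htheta Hheight]; split; cbn [theta eheight].
  - nia.
  - exact (pred_pow2_mul_pow2_succ_le _ _ He Ht Hheight).
Qed.

Lemma tower_bounded_Eiter (e : ECl D) (t n : nat) :
  2 <= eheight e -> 1 <= t -> tower_bounded e t ->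
  tower_bounded (Eiter n e) (tower n t).
Proof.
  intros He Ht Hb; induction n as [|n IH]; [exact Hb|].
  apply tower_bounded_EE; auto using eheight_Eiter_ge2, tower_ge1.
Qed.

Lemma tower_bounded_E_base (d : D) :
  2 <= pn_height D d -> tower_bounded (EE (EBase d)) (2 * pn_height D d).
Proof.
  intros Hd; split; cbn [theta eheight].
  - nia.
  - exact (pred_pow2_mul_double_succ_le _ Hd).
Qed.

End TowerBound.

Theorem mainTheorem8 (D : ProofSystem) (d : D) :
  2 <= pn_height D d ->
  forall n s : nat, 1 <= n -> 2 <= s ->
  theta (Eiter n (EBase d)) s <= tower (n - 1) (2 * pn_height D d) * s.
Proof.
  intros Hd [|m] s Hn Hs; [lia|].
  replace (S m - 1) with m by lia.
  rewrite Eiter_succ_r.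
  apply (tower_bounded_Eiter D s Hs).
  - exact (eheight_Eiter_ge2 1 (EBase d) Hd).
  - lia.
  - exact (tower_bounded_E_base D s Hs d Hd).
Qed.
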